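(* Let $r>0$, $\delta>0$, $R:=r/\delta$, and suppose $R+\tfrac12\in\mathbb{Z}$. Then $$\int_{-\pi}^{\pi}\Delta_\delta(r\cos\theta)\cos\theta\,d\theta\ \ge\ \frac{16\sqrt2}{3\pi^2}\,\frac{\delta^{3/2}}{\sqrt r}.$$
   Context: For $\delta>0$, $Q_\delta(t):=\delta\lfloor t/\delta+1/2\rfloor$ and $\Delta_\delta(t):=t-Q_\delta(t)$. *)

From Stdlib Require Export Reals.
Open Scope R_scope.

(* floor on R: Int_part x = up x - 1 is the integer n with n <= x < n+1 *)
Definition Rfloor (x : R) : Z := Int_part x.

Definition Qd (delta t : R) : R := delta * IZR (Rfloor (t / delta + 1 / 2)).

Definition Dd (delta t : R) : R := t - Qd delta t.

Definition integrand (delta r : R) (theta : R) : R :=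
  Dd delta (r * cos theta) * cos theta.

(* Write rho = r / delta = n + 1/2.  Rounding to the nearest multiple of delta
   writes Q_delta (r cos x) as delta times a sum, over j <= n, of steps jumping
   where |rho cos x| crosses j + 1/2; integrating against cos x turns the
   integral into delta (rho PI - 4 sum_j sin a_j) with cos a_j = (j + 1/2) / rho.
   This defect is a sum of nonnegative chord-arc excesses 2 rho (u - sin u) of
   consecutive angles.  Keeping only the last one, whose angle d satisfies
   cos d = 1 - 1/rho, the bounds rho d^2 >= 2 and d - sin d >= d^3/6 - d^5/120
   give defect^2 rho >= 512/729 >= (16 sqrt 2 / (3 PI^2))^2. *)

From Stdlib Require Import Reals Lra Lia ZArith.
From Coquelicot Require Import Coquelicot.
Open Scope R_scope.

Lemma is_RInt_scal_cos (f : R -> R) (c p q : R) : p <= q ->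
  (forall x, p < x < q -> f x = c * cos x) -> is_RInt f p q (c * (sin q - sin p)).
Proof.
  intros Hpq Hf.
  apply (is_RInt_ext (fun x => c * cos x)).
  { rewrite Rmin_left, Rmax_right by lra. intros x Hx. now rewrite Hf. }
  replace (c * (sin q - sin p)) with (minus (c * sin q) (c * sin p))
    by (unfold minus, plus, opp; simpl; ring).
  apply (is_RInt_derive (fun x => c * sin x)); intros x _.
  - auto_derive; auto. ring.
  - apply (ex_derive_continuous (fun x => c * cos x)). auto_derive; auto.
Qed.

Lemma is_RInt_cos_sqr : is_RInt (fun x => cos x * cos x) (- PI) PI PI.
Proof.
  replace PI with (minus ((PI + sin PI * cos PI) / 2) ((- PI + sin (- PI) * cos (- PI)) / 2)) at 3
    by (rewrite sin_neg, sin_PI; unfold minus, plus, opp; simpl; field).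
  apply (is_RInt_derive (fun x => (x + sin x * cos x) / 2)); intros x _.
  - auto_derive; auto. pose proof (sin2_cos2 x) as Hsc. unfold Rsqr in Hsc. nra.
  - apply (ex_derive_continuous (fun x => cos x * cos x)). auto_derive; auto.
Qed.

Lemma is_RInt_sum_f_R0 (f : nat -> R -> R) (I : nat -> R) (a b : R) (n : nat) :
  (forall j, (j <= n)%nat -> is_RInt (f j) a b (I j)) ->
  is_RInt (fun x => sum_f_R0 (fun j => f j x) n) a b (sum_f_R0 I n).
Proof.
  induction n as [|n IH]; intros Hf; simpl.
  - now apply Hf.
  - exact (is_RInt_plus _ _ a b _ _ (IH (fun j Hj => Hf j (le_S _ _ Hj))) (Hf (S n) (le_n _))).
Qed.

Definition level_step (a t : R) : R :=
  (if Rle_dec a t then 1 else 0) - (if Rlt_dec t (- a) then 1 else 0).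

Lemma cos_Rabs (x : R) : cos (Rabs x) = cos x.
Proof. unfold Rabs; destruct (Rcase_abs x); [apply cos_neg | reflexivity]. Qed.

Lemma lt_cos_of_Rabs_lt_acos (a x : R) : -1 <= a <= 1 -> Rabs x < acos a -> a < cos x.
Proof.
  intros Ha Hx. pose proof (acos_bound a). pose proof (Rabs_pos x).
  rewrite <- cos_Rabs, <- (cos_acos a Ha) at 1. apply cos_decreasing_1; lra.
Qed.

Lemma cos_lt_of_acos_lt_Rabs (a x : R) : -1 <= a <= 1 -> acos a < Rabs x <= PI -> cos x < a.
Proof.
  intros Ha Hx. pose proof (acos_bound a).
  rewrite <- cos_Rabs, <- (cos_acos a Ha). apply cos_decreasing_1; lra.
Qed.

Lemma acos_le_PI2 (a : R) : 0 <= a <= 1 -> acos a <= PI / 2.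
Proof.
  intros Ha. pose proof (acos_bound a). pose proof PI_RGT_0.
  apply cos_decr_0; try lra. rewrite cos_PI2, cos_acos; lra.
Qed.

Lemma level_step_cos_cases (a x : R) : 0 < a <= 1 ->
  (Rabs x < acos a -> level_step a (cos x) = 1) /\
  (acos a < Rabs x < PI - acos a -> level_step a (cos x) = 0) /\
  (PI - acos a < Rabs x <= PI -> level_step a (cos x) = -1).
Proof.
  intros Ha. pose proof (acos_bound a).
  assert (Hopp : acos (- a) = PI - acos a) by apply acos_opp.
  unfold level_step. repeat split; intros Hx.
  - pose proof (lt_cos_of_Rabs_lt_acos a x ltac:(lra) Hx).
    destruct Rle_dec; destruct Rlt_dec; lra.
  - pose proof (cos_lt_of_acos_lt_Rabs a x ltac:(lra) ltac:(lra)).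
    pose proof (lt_cos_of_Rabs_lt_acos (- a) x ltac:(lra) ltac:(lra)).
    destruct Rle_dec; destruct Rlt_dec; lra.
  - pose proof (cos_lt_of_acos_lt_Rabs (- a) x ltac:(lra) ltac:(lra)).
    destruct Rle_dec; destruct Rlt_dec; lra.
Qed.

Lemma is_RInt_cos_level_step (a : R) : 0 < a <= 1 ->
  is_RInt (fun x => cos x * level_step a (cos x)) (- PI) PI (4 * sin (acos a)).
Proof.
  intros Ha. pose proof PI_RGT_0.
  pose proof (acos_bound a). pose proof (acos_le_PI2 a ltac:(lra)).
  pose proof (fun x => level_step_cos_cases a x Ha) as Hcases.
  set (al := acos a) in *.
  set (F := fun x => cos x * level_step a (cos x)).
  assert (P1 : is_RInt F (- PI) (- (PI - al)) (-1 * (sin (- (PI - al)) - sin (- PI)))).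
  { apply is_RInt_scal_cos; [lra|]. intros x Hx. unfold F.
    rewrite (proj2 (proj2 (Hcases x))) by (rewrite Rabs_left; lra). ring. }
  assert (P2 : is_RInt F (- (PI - al)) (- al) (0 * (sin (- al) - sin (- (PI - al))))).
  { apply is_RInt_scal_cos; [lra|]. intros x Hx. unfold F.
    rewrite (proj1 (proj2 (Hcases x))) by (rewrite Rabs_left; lra). ring. }
  assert (P3 : is_RInt F (- al) al (1 * (sin al - sin (- al)))).
  { apply is_RInt_scal_cos; [lra|]. intros x Hx. unfold F.
    rewrite (proj1 (Hcases x)) by (apply Rabs_def1; lra). ring. }
  assert (P4 : is_RInt F al (PI - al) (0 * (sin (PI - al) - sin al))).
  { apply is_RInt_scal_cos; [lra|]. intros x Hx. unfold F.
    rewrite (proj1 (proj2 (Hcases x))) by (rewrite Rabs_pos_eq; lra). ring. }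
  assert (P5 : is_RInt F (PI - al) PI (-1 * (sin PI - sin (PI - al)))).
  { apply is_RInt_scal_cos; [lra|]. intros x Hx. unfold F.
    rewrite (proj2 (proj2 (Hcases x))) by (rewrite Rabs_pos_eq; lra). ring. }
  pose proof (is_RInt_Chasles _ _ _ _ _ _ (is_RInt_Chasles _ _ _ _ _ _
    (is_RInt_Chasles _ _ _ _ _ _ (is_RInt_Chasles _ _ _ _ _ _ P1 P2) P3) P4) P5) as Hglued.
  apply (eq_ind _ (is_RInt F (- PI) PI) Hglued).
  unfold plus; simpl. rewrite !sin_neg, sin_PI, sin_PI_x. ring.
Qed.

Lemma level_step_scale (a t rho : R) : 0 < rho ->
  level_step a (rho * t) = level_step (a / rho) t.
Proof.
  intros Hrho. assert (E : rho * (a / rho) = a) by (field; lra).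
  set (b := a / rho) in *. rewrite <- E. unfold level_step.
  destruct (Rle_dec (rho * b) (rho * t)); destruct (Rle_dec b t);
    destruct (Rlt_dec (rho * t) (- (rho * b))); destruct (Rlt_dec t (- b)); nra.
Qed.

Lemma Int_part_ge_iff (x : R) (k : Z) : (k <= Int_part x)%Z <-> IZR k <= x.
Proof.
  destruct (base_Int_part x) as [Hlo Hhi]. split; intros Hk.
  - apply IZR_le in Hk. lra.
  - assert (Hlt : IZR k < IZR (Int_part x + 1)) by (rewrite plus_IZR; lra).
    apply lt_IZR in Hlt. lia.
Qed.

Lemma level_step_half (t : R) (j : nat) :
  let m := Int_part (t + 1/2) in
  level_step (INR j + 1/2) t =
    IZR ((if Z_le_dec (Z.of_nat j + 1) m then 1 else 0)
         - (if Z_lt_dec m (- Z.of_nat j) then 1 else 0)).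
Proof.
  cbv zeta. rewrite minus_IZR. unfold level_step.
  assert (Hj : IZR (Z.of_nat j) = INR j) by (symmetry; apply INR_IZR_INZ).
  destruct (Z_le_dec _ _) as [h1|h1]; rewrite Int_part_ge_iff, plus_IZR, Hj in h1;
  (destruct (Z_lt_dec _ _) as [h2|h2]; [rewrite Z.lt_nge in h2 | rewrite Z.nlt_ge in h2]);
  rewrite Int_part_ge_iff, opp_IZR, Hj in h2;
  destruct Rle_dec; destruct Rlt_dec; lra.
Qed.

Lemma sum_level_steps_half_clamp (t : R) (n : nat) :
  sum_f_R0 (fun j => level_step (INR j + 1/2) t) n =
    IZR (Z.max (- Z.of_nat (S n)) (Z.min (Int_part (t + 1/2)) (Z.of_nat (S n)))).
Proof.
  induction n as [|n IH]; cbn [sum_f_R0]; rewrite level_step_half.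
  - f_equal. destruct Z_le_dec; destruct Z_lt_dec; simpl; lia.
  - rewrite IH, <- plus_IZR. f_equal. destruct Z_le_dec; destruct Z_lt_dec; lia.
Qed.

Lemma Int_part_half_as_sum (t : R) (n : nat) : - (INR n + 1/2) <= t <= INR n + 1/2 ->
  IZR (Int_part (t + 1/2)) = sum_f_R0 (fun j => level_step (INR j + 1/2) t) n.
Proof.
  intros Ht. rewrite sum_level_steps_half_clamp. f_equal.
  rewrite INR_IZR_INZ in Ht.
  assert (Hlo : (- Z.of_nat n <= Int_part (t + 1/2))%Z)
    by (apply Int_part_ge_iff; rewrite opp_IZR; lra).
  assert (Hhi : ~ (Z.of_nat n + 2 <= Int_part (t + 1/2))%Z)
    by (rewrite Int_part_ge_iff, plus_IZR; simpl; lra).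
  lia.
Qed.

Definition level_angle (rho : R) (j : nat) : R := acos ((INR j + 1/2) / rho).

Lemma level_ratio_range (rho : R) (j : nat) : 0 < rho -> INR j + 1/2 <= rho ->
  0 < (INR j + 1/2) / rho <= 1.
Proof.
  intros Hrho Hj. pose proof (pos_INR j). split.
  - apply Rdiv_lt_0_compat; lra.
  - apply Rmult_le_reg_r with rho; [lra|]. field_simplify; lra.
Qed.

Lemma integrand_as_level_sum (delta r : R) (n : nat) (x : R) : 0 < delta ->
  r / delta = INR n + 1/2 ->
  integrand delta r x = r * (cos x * cos x)
    - delta * sum_f_R0 (fun j => cos x * level_step ((INR j + 1/2) / (r / delta)) (cos x)) n.
Proof.
  intros Hdelta Hrho.
  assert (Hpos : 0 < r / delta) by (rewrite Hrho; pose proof (pos_INR n); lra).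
  unfold integrand, Dd, Qd, Rfloor.
  replace (r * cos x / delta) with (r / delta * cos x) by (field; lra).
  rewrite Int_part_half_as_sum with (n := n).
  - assert (Hsum : sum_f_R0 (fun j => cos x * level_step ((INR j + 1/2) / (r / delta)) (cos x)) n
                   = cos x * sum_f_R0 (fun j => level_step (INR j + 1/2) (r / delta * cos x)) n).
    { rewrite scal_sum. apply sum_eq. intros j _. rewrite level_step_scale by exact Hpos. ring. }
    rewrite Hsum. ring.
  - pose proof (COS_bound x). rewrite <- Hrho. split; nra.
Qed.

Lemma is_RInt_integrand (delta r : R) (n : nat) : 0 < delta -> r / delta = INR n + 1/2 ->
  is_RInt (integrand delta r) (- PI) PI
    (r * PI - delta * (4 * sum_f_R0 (fun j => sin (level_angle (r / delta) j)) n)).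
Proof.
  intros Hdelta Hrho.
  assert (Hpos : 0 < r / delta) by (rewrite Hrho; pose proof (pos_INR n); lra).
  apply (is_RInt_ext (fun x => r * (cos x * cos x) + - delta
           * sum_f_R0 (fun j => cos x * level_step ((INR j + 1/2) / (r / delta)) (cos x)) n)).
  { intros x _. rewrite (integrand_as_level_sum delta r n x Hdelta Hrho). simpl. ring. }
  replace (4 * sum_f_R0 _ n) with (sum_f_R0 (fun j => 4 * sin (level_angle (r / delta) j)) n)
    by (rewrite scal_sum; apply sum_eq; intros; ring).
  rewrite Rminus_def, Ropp_mult_distr_l.
  apply (is_RInt_plus _ _ _ _ _ _ (is_RInt_scal _ _ _ r _ is_RInt_cos_sqr)).
  apply (is_RInt_scal (V := R_NormedModule)).
  apply is_RInt_sum_f_R0. intros j Hj. apply is_RInt_cos_level_step, level_ratio_range; [exact Hpos|].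
  rewrite Hrho. apply le_INR in Hj. lra.
Qed.

Lemma sub_sin_nonneg (x : R) : 0 <= x -> 0 <= x - sin x.
Proof. intros [Hx|<-]; [pose proof (sin_lt_x x Hx); lra | rewrite sin_0; lra]. Qed.

Section LevelAngles.

Variable rho : R.
Hypothesis rho_pos : 0 < rho.

Notation al := (level_angle rho).

Lemma cos_level_angle (j : nat) : INR j + 1/2 <= rho -> cos (al j) = (INR j + 1/2) / rho.
Proof. intros Hj. apply cos_acos. pose proof (level_ratio_range rho j rho_pos Hj). lra. Qed.

Lemma level_angle_range (j : nat) : INR j + 1/2 <= rho -> 0 <= al j <= PI / 2.
Proof.
  intros Hj. pose proof (level_ratio_range rho j rho_pos Hj).
  split; [apply acos_bound | apply acos_le_PI2; lra].
Qed.

Lemma level_angle_succ_le (j : nat) : INR j + 3/2 <= rho -> al (S j) <= al j.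
Proof.
  intros Hj.
  assert (Hj' : INR j + 1/2 <= rho) by lra.
  assert (Hs : INR (S j) + 1/2 <= rho) by (rewrite S_INR; lra).
  pose proof (level_angle_range j Hj'). pose proof (level_angle_range (S j) Hs).
  pose proof PI_RGT_0.
  apply cos_decr_0; try lra.
  rewrite (cos_level_angle j Hj'), (cos_level_angle (S j) Hs), S_INR.
  apply Rmult_le_compat_r; [apply Rlt_le, Rinv_0_lt_compat, rho_pos | lra].
Qed.

Lemma sin_level_angle_sub (j : nat) : INR j + 3/2 <= rho ->
  rho * sin (al j - al (S j)) = (INR j + 3/2) * sin (al j) - (INR j + 1/2) * sin (al (S j)).
Proof.
  intros Hj.
  assert (Hs : INR (S j) + 1/2 <= rho) by (rewrite S_INR; lra).
  rewrite sin_minus, (cos_level_angle j ltac:(lra)), (cos_level_angle (S j) Hs), S_INR.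
  field. lra.
Qed.

(* Chosen so that consecutive values differ by the chord-arc excess of
   consecutive angles, and so that at [rho = n + 1/2], where [al n = 0], it is
   the full defect [rho * PI - 4 * sum_{j <= n} sin (al j)]. *)
Definition partial_defect (m : nat) : R :=
  2 * rho * (PI / 2 - al m) - 4 * sum_f_R0 (fun j => sin (al j)) m
  + (2 * INR m + 3) * sin (al m).

Lemma partial_defect_0_nonneg : 1/2 <= rho -> 0 <= partial_defect 0.
Proof.
  intros Hrho. assert (H0 : INR 0 + 1/2 <= rho) by (simpl; lra).
  pose proof (level_angle_range 0 H0) as Hrange.
  pose proof (cos_level_angle 0 H0) as Hcos. simpl INR in Hcos.
  pose proof (sub_sin_nonneg (PI / 2 - al 0) ltac:(lra)) as Hshift.
  rewrite sin_shift, Hcos in Hshift.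
  pose proof (SIN_bound (al 0)).
  assert (Hr : rho * ((0 + 1/2) / rho) = 1/2) by (field; lra).
  unfold partial_defect. simpl sum_f_R0. simpl INR. nra.
Qed.

Lemma partial_defect_succ (j : nat) : INR j + 3/2 <= rho ->
  partial_defect (S j) =
    partial_defect j + 2 * rho * ((al j - al (S j)) - sin (al j - al (S j))).
Proof.
  intros Hj. pose proof (sin_level_angle_sub j Hj).
  unfold partial_defect. cbn [sum_f_R0]. rewrite S_INR. nra.
Qed.

Lemma partial_defect_nonneg (m : nat) : INR m + 1/2 <= rho -> 0 <= partial_defect m.
Proof.
  induction m as [|m IH]; intros Hm.
  - apply partial_defect_0_nonneg. simpl in Hm. lra.
  - rewrite S_INR in Hm. rewrite partial_defect_succ by lra.
    pose proof (level_angle_succ_le m ltac:(lra)).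
    pose proof (sub_sin_nonneg (al m - al (S m)) ltac:(lra)).
    pose proof (IH ltac:(lra)). nra.
Qed.

End LevelAngles.

Lemma level_angle_last (rho : R) (n : nat) : rho = INR n + 1/2 -> level_angle rho n = 0.
Proof.
  intros Hrho. unfold level_angle.
  replace ((INR n + 1/2) / rho) with 1 by (subst rho; field; pose proof (pos_INR n); lra).
  apply acos_1.
Qed.

Lemma partial_defect_last (rho : R) (n : nat) : rho = INR n + 1/2 ->
  partial_defect rho n = rho * PI - 4 * sum_f_R0 (fun j => sin (level_angle rho j)) n.
Proof.
  intros Hrho. unfold partial_defect. rewrite (level_angle_last rho n Hrho), sin_0. field.
Qed.

Lemma sub_sin_ge_cubic (x : R) : 0 <= x <= 4 -> x ^ 3 / 6 - x ^ 5 / 120 <= x - sin x.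
Proof.
  intros Hx. destruct (pre_sin_bound x 0 ltac:(lra) ltac:(lra)) as [_ Hub].
  unfold sin_approx, sin_term in Hub. simpl in Hub. lra.
Qed.

Lemma one_sub_sqr_half_le_cos (x : R) : - PI / 2 <= x <= PI / 2 -> 1 - x ^ 2 / 2 <= cos x.
Proof.
  intros Hx. destruct (cos_bound x 0 ltac:(lra) ltac:(lra)) as [Hlb _].
  unfold cos_approx, cos_term in Hlb. simpl in Hlb. lra.
Qed.

Lemma arc_excess_lower (rho d : R) : 3/2 <= rho -> 0 <= d <= PI / 2 -> cos d = 1 - 1 / rho ->
  512/729 <= 4 * rho ^ 3 * (d - sin d) ^ 2.
Proof.
  intros Hrho Hd Hcos. pose proof PI_4.
  set (y := d ^ 2).
  assert (Hy : y <= 4) by (unfold y; nra).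
  assert (Hry : 2 <= rho * y).
  { pose proof (one_sub_sqr_half_le_cos d ltac:(lra)) as Hlb. rewrite Hcos in Hlb.
    assert (Hinv : rho * (1 / rho) = 1) by (field; lra). fold y in Hlb. nra. }
  assert (Hcubic : d ^ 3 * (1/6 - y/120) <= d - sin d).
  { pose proof (sub_sin_ge_cubic d ltac:(lra)). unfold y. lra. }
  assert (Hsq : (d ^ 3 * (1/6 - y/120)) ^ 2 <= (d - sin d) ^ 2).
  { apply pow_incr. split; [|exact Hcubic]. apply Rmult_le_pos; [apply pow_le|]; lra. }
  assert (Hpoly : 512/729 <= 4 * (rho * y) ^ 3 * (1/6 - y/120) ^ 2).
  { destruct (Rle_lt_dec y 2).
    - assert (2 ^ 3 <= (rho * y) ^ 3) by (apply pow_incr; lra).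
      assert ((3/20) ^ 2 <= (1/6 - y/120) ^ 2) by (apply pow_incr; lra). nra.
    - assert (3 ^ 3 <= (rho * y) ^ 3) by (apply pow_incr; nra).
      assert ((2/15) ^ 2 <= (1/6 - y/120) ^ 2) by (apply pow_incr; lra). nra. }
  assert (E : 4 * (rho * y) ^ 3 * (1/6 - y/120) ^ 2 = 4 * rho ^ 3 * (d ^ 3 * (1/6 - y/120)) ^ 2)
    by (unfold y; ring).
  assert (0 <= rho ^ 3) by (apply pow_le; lra).
  nra.
Qed.

Lemma partial_defect_last_lower (rho : R) (n : nat) : rho = INR n + 1/2 ->
  512/729 <= partial_defect rho n ^ 2 * rho.
Proof.
  intros Hrho. pose proof PI2_3_2.
  destruct n as [|k].
  - rewrite (partial_defect_last rho 0 Hrho). simpl sum_f_R0.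
    rewrite (level_angle_last rho 0 Hrho), sin_0. simpl INR in Hrho. subst rho. nra.
  - rewrite S_INR in Hrho. pose proof (pos_INR k).
    assert (Hk : INR k + 3/2 <= rho) by lra.
    rewrite partial_defect_succ by lra.
    pose proof (partial_defect_nonneg rho ltac:(lra) k ltac:(lra)).
    rewrite (level_angle_last rho (S k) ltac:(rewrite S_INR; lra)), Rminus_0_r.
    pose proof (level_angle_range rho ltac:(lra) k ltac:(lra)) as Hd.
    pose proof (cos_level_angle rho ltac:(lra) k ltac:(lra)) as Hcos.
    set (d := level_angle rho k) in *.
    assert (Hcos' : cos d = 1 - 1 / rho) by (rewrite Hcos, Hrho; field; lra).
    pose proof (arc_excess_lower rho d ltac:(lra) Hd Hcos').
    pose proof (sub_sin_nonneg d ltac:(lra)).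
    assert ((2 * rho * (d - sin d)) ^ 2 <= (partial_defect rho k + 2 * rho * (d - sin d)) ^ 2)
      by (apply pow_incr; nra).
    nra.
Qed.

Lemma half_integer_as_nat (x : R) : 0 < x -> (exists k : Z, x + 1/2 = IZR k) ->
  exists n : nat, x = INR n + 1/2.
Proof.
  intros Hx [k Hk].
  assert (Hk1 : (1 <= k)%Z) by (apply Z.lt_pred_le, lt_IZR; simpl; lra).
  exists (Z.to_nat (k - 1)).
  rewrite INR_IZR_INZ, Z2Nat.id, minus_IZR by lia. simpl. lra.
Qed.

Lemma le_mult_sqrt (c p rho : R) : 0 <= p -> 0 <= rho -> c ^ 2 <= p ^ 2 * rho ->
  c <= p * sqrt rho.
Proof.
  intros Hp Hrho Hc.
  apply Rle_trans with (sqrt (c ^ 2)).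
  - rewrite <- Rsqr_pow2, sqrt_Rsqr_abs. apply Rle_abs.
  - rewrite <- (sqrt_pow2 p Hp), <- sqrt_mult by (try apply pow2_ge_0; lra).
    apply sqrt_le_1_alt, Hc.
Qed.

Lemma lemma5p1_constant_sqr : (16 * sqrt 2 / (3 * PI ^ 2)) ^ 2 <= 512/729.
Proof.
  pose proof PI2_3_2.
  assert (Hpi4 : 3 ^ 4 <= PI ^ 4) by (apply pow_incr; lra).
  assert (Hs : sqrt 2 * sqrt 2 = 2) by (apply sqrt_sqrt; lra).
  replace ((16 * sqrt 2 / (3 * PI ^ 2)) ^ 2) with (256 * (sqrt 2 * sqrt 2) / (9 * PI ^ 4))
    by (field; lra).
  rewrite Hs. apply Rmult_le_reg_r with (9 * PI ^ 4); [lra|].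
  field_simplify; lra.
Qed.

Lemma Rpower_three_halves_div_sqrt (delta rho : R) : 0 < delta -> 0 < rho ->
  Rpower delta (3 / 2) / sqrt (delta * rho) = delta / sqrt rho.
Proof.
  intros Hdelta Hrho.
  assert (Hsd : 0 < sqrt delta) by (apply sqrt_lt_R0; lra).
  assert (Hsr : 0 < sqrt rho) by (apply sqrt_lt_R0; lra).
  replace (3 / 2) with (1 + / 2) by field.
  rewrite Rpower_plus, Rpower_1, Rpower_sqrt, sqrt_mult by lra. field; lra.
Qed.

Theorem lemma5p1 (r delta : R) (hr : 0 < r) (hdelta : 0 < delta)
  (hR : exists k : Z, r / delta + 1 / 2 = IZR k) :
  exists pr : Riemann_integrable (integrand delta r) (- PI) PI,
    RiemannInt pr >=
      (16 * sqrt 2 / (3 * PI ^ 2)) * (Rpower delta (3 / 2) / sqrt r).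
Proof.
  assert (Hrho_pos : 0 < r / delta) by (apply Rdiv_lt_0_compat; lra).
  destruct (half_integer_as_nat (r / delta) Hrho_pos hR) as [n Hrho].
  pose proof (is_RInt_integrand delta r n hdelta Hrho) as Hint.
  exists (ex_RInt_Reals_0 _ _ _ (ex_intro _ _ Hint)).
  rewrite <- RInt_Reals, (is_RInt_unique _ _ _ _ Hint).
  set (rho := r / delta) in *.
  assert (Hr : r = delta * rho) by (unfold rho; field; lra).
  assert (Hsr : 0 < sqrt rho) by (apply sqrt_lt_R0; lra).
  replace (r * PI - _) with (delta * partial_defect rho n)
    by (rewrite (partial_defect_last rho n Hrho), Hr; ring).
  rewrite Hr, Rpower_three_halves_div_sqrt by lra.
  pose proof lemma5p1_constant_sqr.
  set (C := 16 * sqrt 2 / (3 * PI ^ 2)) in *.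
  assert (Hmain : C <= partial_defect rho n * sqrt rho).
  { apply le_mult_sqrt; [apply (partial_defect_nonneg rho); lra | lra |].
    pose proof (partial_defect_last_lower rho n Hrho). lra. }
  replace (C * (delta / sqrt rho)) with (delta * (C / sqrt rho)) by (field; lra).
  apply Rle_ge, Rmult_le_compat_l; [lra|].
  apply Rmult_le_reg_r with (sqrt rho); [lra|].
  replace (C / sqrt rho * sqrt rho) with C by (field; lra). exact Hmain.
Qed.
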